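(* Let $\Sigma_{g,m,n}$ be a compact oriented surface of genus $g$ with $m$ boundary components labeled $0$ and $n$ boundary components labeled $2$, and assume $(g,n)$ is such that the right-hand side below is defined ($g+n\ge 1$ or $(g,n)=(0,0)$). Then $$\dim V_{\Sigma_{g,m,n}}=5^{\frac{g-1}{2}}\left\{\left(\tfrac{1+\sqrt5}{2}\right)^{g+n-1}+(-1)^{g-1}\left(\tfrac{1-\sqrt5}{2}\right)^{g+n-1}\right\}.$$
   Context: The Fibonacci TQFT ($SO(3)$ Chern–Simons theory at $r=5$) assigns to each compact oriented surface $\Sigma$ whose boundary components are parametrized and labeled by elements of $\{0,2\}$ a finite-dimensional Hilbert space $V_\Sigma$, with: $V_{\Sigma_1\sqcup\Sigma_2}=V_{\Sigma_1}\otimes V_{\Sigma_2}$; for a simple closed curve $f$ in $\Sigma$, $V_\Sigma=V_{\Sigma_{f,0}}\oplus V_{\Sigma_{f,2}}$, where $\Sigma_{f,a}$ is $\Sigma$ cut along $f$ with both new boundary components labeled $a$; a disk labeled $a$ has $\dim=\delta_{0a}$; an annulus labeled $a,b$ has $\dim=\delta_{ab}$; a genus-0 surface with three boundary components labeled $a,b,c$ has $\dim=0$ if $a+b+c=2$ and $\dim=1$ otherwise. *)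

From Stdlib Require Import Reals ZArith Lia.
Open Scope R_scope.

(* A connected compact oriented surface with labeled boundary is determined
   up to homeomorphism by (g, m, n): genus g, m boundary components labeled 0,
   n boundary components labeled 2.  A disconnected surface is a disjoint union
   of such, with dimension the product (V of a disjoint union is the tensor
   product), so a dimension assignment is a function D g m n.

   Fib_dim_axioms D states the axioms of the context:
   - disk, annulus, pair of pants dimensions;
   - gluing along a non-separating simple closed curve in Sigma_{g+1,m,n}:
     cutting yields Sigma_{g,m+2,n} (label 0) or Sigma_{g,m,n+2} (label 2);
   - gluing along a separating simple closed curve in Sigma_{g1+g2,m1+m2,n1+n2}
     splitting it into pieces of genus g1 (with m1,n1 old boundaries) and g2
     (with m2,n2): cutting yields Sigma_{g1,m1+1,n1} ⊔ Sigma_{g2,m2+1,n2}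
     (label 0) or Sigma_{g1,m1,n1+1} ⊔ Sigma_{g2,m2,n2+1} (label 2). *)
Definition Fib_dim_axioms (D : nat -> nat -> nat -> nat) : Prop :=
  D 0%nat 1%nat 0%nat = 1%nat /\ D 0%nat 0%nat 1%nat = 0%nat /\
  D 0%nat 2%nat 0%nat = 1%nat /\ D 0%nat 1%nat 1%nat = 0%nat /\
  D 0%nat 0%nat 2%nat = 1%nat /\
  (* pairs of pants: dim 0 iff a+b+c = 2 *)
  D 0%nat 3%nat 0%nat = 1%nat /\ D 0%nat 2%nat 1%nat = 0%nat /\
  D 0%nat 1%nat 2%nat = 1%nat /\ D 0%nat 0%nat 3%nat = 1%nat /\
  (forall g m n, D (S g) m n = (D g (m + 2) n + D g m (n + 2))%nat) /\
  (forall g1 g2 m1 m2 n1 n2,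
      D (g1 + g2)%nat (m1 + m2)%nat (n1 + n2)%nat =
      (D g1 (S m1) n1 * D g2 (S m2) n2 + D g1 m1 (S n1) * D g2 m2 (S n2))%nat).

Definition fib_formula (g n : nat) : R :=
  Rpower 5 ((INR g - 1) / 2) *
  (powerRZ ((1 + sqrt 5) / 2) (Z.of_nat (g + n) - 1) +
   powerRZ (-1) (Z.of_nat g - 1) *
   powerRZ ((1 - sqrt 5) / 2) (Z.of_nat (g + n) - 1)).

(* The gluing axioms determine D completely.  Cutting off a disk labeled 0
   shows that D does not depend on m, and cutting off a pair of pants labeled
   (0,2,2) resp. (2,2,2) gives the Fibonacci recurrence
   D g (n+2) = D g n + D g (n+1); cutting a handle gives
   D (g+1) n = D g n + D g (n+2).  Together with D 0 0 = 1 and D 0 1 = 0 these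
   recurrences have a unique solution, and the closed formula satisfies them
   because both roots phi, psi of x^2 = x + 1 do, while
   phi^k + phi^(k+2) = sqrt 5 phi^(k+1) and psi^k + psi^(k+2) = - sqrt 5 psi^(k+1). *)
From Stdlib Require Import Reals ZArith Lia Lra.
Open Scope R_scope.

Lemma sqrt5_sqr : sqrt 5 * sqrt 5 = 5.
Proof. apply sqrt_sqrt; lra. Qed.

Lemma golden_neq0 : (1 + sqrt 5) / 2 <> 0.
Proof. pose proof (sqrt_pos 5); lra. Qed.

Lemma golden_conj_neq0 : (1 - sqrt 5) / 2 <> 0.
Proof.
  intro H; pose proof sqrt5_sqr as S5.
  replace (sqrt 5) with 1 in S5 by lra; lra.
Qed.

Lemma powerRZ_quadratic (x c d : R) (z : Z) :
  x <> 0 -> x * x = c * x + d ->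
  powerRZ x (z + 2) = c * powerRZ x (z + 1) + d * powerRZ x z.
Proof.
  intros Hx Hq.
  rewrite !powerRZ_add by exact Hx; simpl.
  replace (x * (x * 1)) with (c * x + d) by lra; ring.
Qed.

Lemma powerRZ_opp1_succ (z : Z) : powerRZ (-1) (z + 1) = - powerRZ (-1) z.
Proof. rewrite powerRZ_add by lra; simpl; ring. Qed.

Lemma fib_formula_recn (g n : nat) :
  fib_formula g (n + 2) = fib_formula g n + fib_formula g (S n).
Proof.
  unfold fib_formula.
  replace (Z.of_nat (g + (n + 2)) - 1)%Z with ((Z.of_nat (g + n) - 1) + 2)%Z by lia.
  replace (Z.of_nat (g + S n) - 1)%Z with ((Z.of_nat (g + n) - 1) + 1)%Z by lia.
  rewrite (powerRZ_quadratic _ 1 1) by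
    (exact golden_neq0 || (pose proof sqrt5_sqr; nra)).
  rewrite (powerRZ_quadratic ((1 - sqrt 5) / 2) 1 1) by
    (exact golden_conj_neq0 || (pose proof sqrt5_sqr; nra)).
  ring.
Qed.

Lemma fib_formula_recg (g n : nat) :
  fib_formula (S g) n = fib_formula g n + fib_formula g (n + 2).
Proof.
  unfold fib_formula.
  replace (Z.of_nat (g + (n + 2)) - 1)%Z with ((Z.of_nat (g + n) - 1) + 2)%Z by lia.
  replace (Z.of_nat (S g + n) - 1)%Z with ((Z.of_nat (g + n) - 1) + 1)%Z by lia.
  replace (Z.of_nat (S g) - 1)%Z with ((Z.of_nat g - 1) + 1)%Z by lia.
  replace ((INR (S g) - 1) / 2) with ((INR g - 1) / 2 + / 2) by (rewrite S_INR; field).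
  rewrite Rpower_plus, Rpower_sqrt, powerRZ_opp1_succ by lra.
  rewrite (powerRZ_quadratic _ (sqrt 5) (-1)) by
    (exact golden_neq0 || (pose proof sqrt5_sqr; nra)).
  rewrite (powerRZ_quadratic ((1 - sqrt 5) / 2) (- sqrt 5) (-1)) by
    (exact golden_conj_neq0 || (pose proof sqrt5_sqr; nra)).
  ring.
Qed.

Lemma fib_formula_0_0 : fib_formula 0 0 = 1.
Proof.
  unfold fib_formula; simpl.
  replace ((0 - 1) / 2) with (- / 2) by field.
  rewrite Rpower_Ropp, Rpower_sqrt by lra.
  pose proof sqrt5_sqr; pose proof golden_neq0; pose proof golden_conj_neq0.
  assert (0 < sqrt 5) by (apply sqrt_lt_R0; lra).
  field_simplify; [| repeat split; lra].
  replace (sqrt 5 ^ 3) with (5 * sqrt 5) by (simpl; nra).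
  field; lra.
Qed.

Lemma fib_formula_0_1 : fib_formula 0 1 = 0.
Proof. unfold fib_formula; simpl; lra. Qed.

Lemma genus_fibonacci_unique (f h : nat -> nat -> R) :
  f 0%nat 0%nat = h 0%nat 0%nat -> f 0%nat 1%nat = h 0%nat 1%nat ->
  (forall g n, f g (n + 2)%nat = f g n + f g (S n)) ->
  (forall g n, h g (n + 2)%nat = h g n + h g (S n)) ->
  (forall g n, f (S g) n = f g n + f g (n + 2)%nat) ->
  (forall g n, h (S g) n = h g n + h g (n + 2)%nat) ->
  forall g n, f g n = h g n.
Proof.
  intros E0 E1 Fn Hn Fg Hg g.
  induction g as [|g IH]; intro n.
  - assert (Pair : forall k, f 0%nat k = h 0%nat k /\ f 0%nat (S k) = h 0%nat (S k)).
    { induction k as [|k [IHk IHSk]]; [split; assumption|].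
      split; [exact IHSk|].
      replace (S (S k)) with (k + 2)%nat by lia.
      rewrite Fn, Hn, IHk, IHSk; reflexivity. }
    apply Pair.
  - rewrite Fg, Hg, !IH; reflexivity.
Qed.

Section FibonacciDimensions.

Variable D : nat -> nat -> nat -> nat.
Hypothesis HD : Fib_dim_axioms D.

Lemma dim_indep_m (g m n : nat) : D g m n = D g 0 n.
Proof.
  destruct HD as (h010 & h001 & _ & _ & _ & _ & _ & _ & _ & _ & Hsep).
  induction m as [|m IH]; [reflexivity|].
  pose proof (Hsep g 0%nat m 0%nat n 0%nat) as E.
  rewrite !Nat.add_0_r, h010, h001 in E; lia.
Qed.

Lemma dim_recn (g m n : nat) : D g m (n + 2) = (D g m n + D g m (S n))%nat.
Proof.
  destruct HD as (_ & _ & _ & _ & _ & _ & _ & h012 & h003 & _ & Hsep).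
  pose proof (Hsep g 0%nat m 0%nat n 2%nat) as E.
  rewrite !Nat.add_0_r, h012, h003, (dim_indep_m g (S m) n),
    <- (dim_indep_m g m n) in E; lia.
Qed.

Lemma dim_recg (g m n : nat) : D (S g) m n = (D g m n + D g m (n + 2))%nat.
Proof.
  destruct HD as (_ & _ & _ & _ & _ & _ & _ & _ & _ & Hhandle & _).
  rewrite Hhandle, (dim_indep_m g (m + 2)), (dim_indep_m g m n); reflexivity.
Qed.

Lemma dim_0_0_0 : D 0 0 0 = 1%nat.
Proof.
  destruct HD as (h010 & h001 & _ & _ & _ & _ & _ & _ & _ & _ & Hsep).
  pose proof (Hsep 0%nat 0%nat 0%nat 0%nat 0%nat 0%nat) as E; simpl in E.
  rewrite h010, h001 in E; lia.
Qed.

End FibonacciDimensions.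

Theorem lemma6p1 (D : nat -> nat -> nat -> nat) (HD : Fib_dim_axioms D)
  (g m n : nat) (Hgn : (1 <= g + n)%nat \/ (g = 0%nat /\ n = 0%nat)) :
  INR (D g m n) = fib_formula g n.
Proof.
  (* [fib_formula] uses integer powers. *)
  clear Hgn.
  pose proof HD as (_ & h001 & _).
  revert g n; apply genus_fibonacci_unique.
  - rewrite dim_indep_m, dim_0_0_0 by exact HD; symmetry; exact fib_formula_0_0.
  - rewrite dim_indep_m, h001 by exact HD; symmetry; exact fib_formula_0_1.
  - intros g n; rewrite dim_recn, plus_INR by exact HD; reflexivity.
  - exact fib_formula_recn.
  - intros g n; rewrite dim_recg, plus_INR by exact HD; reflexivity.
  - exact fib_formula_recg.
Qed.
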